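(* Assume $\mathcal S\subseteq\mathcal D$. Let $F\in\mathbb R^{d\times s}$, $H=BFC$, $\bar F=F\bar C$, $\bar H=\bar B\bar F$, and consider the closed-loop systems $e[k+1]=(I_{2n}-H)e[k]$ (closed loop of $\Sigma^1$ under $u=-Fy$) and $\bar e[k+1]=(I_s-\bar H)\bar e[k]$ (closed loop of $\Sigma^2$ under $u=-\bar F\bar e$). Suppose every eigenvalue $\lambda$ of $\bar H$ satisfies $|\lambda-1|<1$. Then: (i) every trajectory of $\bar e[k+1]=(I_s-\bar H)\bar e[k]$ converges to $0$ exponentially; (ii) the system $e[k+1]=(I_{2n}-H)e[k]$ is stable in the sense of Lyapunov (all trajectories remain bounded; equivalently all eigenvalues of $I_{2n}-H$ have modulus at most $1$ and those of modulus $1$ are semisimple); (iii) for every trajectory of $e[k+1]=(I_{2n}-H)e[k]$ and every $p\in\mathcal S$, the component $e_p[k]$ converges to $0$ exponentially.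
   Context: Standing setup. Let $n\ge 1$ and consider a radial distribution network modeled as a tree with root node $0$ (the substation), non-root nodes $\mathcal N=\{1,\dots,n\}$, and edge set $\mathcal L$; each edge $(i,j)\in\mathcal L$ has resistance $r_{ij}\in\mathbb R$ and reactance $x_{ij}\in\mathbb R$. For a node $i$, $\mathcal L_i$ denotes the set of edges on the unique path from node $0$ to node $i$. Define $R^0,X^0\in\mathbb R^{n\times n}$ by $R^0_{ij}=2\sum_{(w,t)\in\mathcal L_i\cap\mathcal L_j} r_{wt}$ and $X^0_{ij}=2\sum_{(w,t)\in\mathcal L_i\cap\mathcal L_j} x_{wt}$. Let $\mathcal D_1\subseteq\mathcal N$ (nodes with a DER) and $\mathcal S_1\subseteq\mathcal N$ (nodes with a sensor) be nonempty, listed in increasing order; let $\mathcal D_2=\{i+n: i\in\mathcal D_1\}$, $\mathcal S_2=\{i+n:i\in\mathcal S_1\}$, $\mathcal D=\mathcal D_1\cup\mathcal D_2$, $\mathcal S=\mathcal S_1\cup\mathcal S_2$ (subsets of $\{1,\dots,2n\}$, listed in increasing order), $d=|\mathcal D|$, $s=|\mathcal S|$, $\overline{\mathcal D}=\{1,\dots,2n\}\setminus\mathcal D$, $\overline{\mathcal S}=\{1,\dots,2n\}\setminus\mathcal S$. For an increasingly ordered set $\Omega=\{i_1,\dots,i_g\}\subseteq\{1,\dots,c\}$, let $\Gamma_c(\Omega)=[\mathfrak e_{i_1}\ \cdots\ \mathfrak e_{i_g}]\in\mathbb R^{c\times g}$, where $\mathfrak e_\omega$ is the $\omega$-th standard basis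 vector of $\mathbb R^c$. Set $T^d=\Gamma_n(\mathcal D_1)$, $R=R^0T^d$, $X=X^0T^d\in\mathbb R^{n\times d/2}$, $T^s=\Gamma_{2n}(\mathcal S)^\top\in\mathbb R^{s\times 2n}$, and $A=I_{2n}$, $B=\begin{bmatrix}X & R\\ -\tfrac12 R & \tfrac12 X\end{bmatrix}\in\mathbb R^{2n\times d}$, $C=T^s$. The system $\Sigma^1$ is $e[k+1]=Ae[k]+Bu[k]$, $y[k]=Ce[k]$ with state $e[k]\in\mathbb R^{2n}$, input $u[k]\in\mathbb R^d$, output $y[k]\in\mathbb R^s$. Define the permutation matrix $T=[\Gamma_{2n}(\mathcal S\cap\mathcal D),\ \Gamma_{2n}(\mathcal S\cap\overline{\mathcal D}),\ \Gamma_{2n}(\overline{\mathcal S}\cap\mathcal D),\ \Gamma_{2n}(\overline{\mathcal S}\cap\overline{\mathcal D})]\in\mathbb R^{2n\times 2n}$ (each intersection listed in increasing order) and $G=\Gamma_{2n}(\{1,\dots,s\})\in\mathbb R^{2n\times s}$. The reduced system $\Sigma^2$ has $\bar A=I_s$, $\bar B=G^\top T^{-1}B\in\mathbb R^{s\times d}$, $\bar C=CTG\in\mathbb R^{s\times s}$, and reduced state $\bar e=G^\top T^{-1}e\in\mathbb R^s$. *)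

From HB Require Import structures.
From mathcomp Require Import all_boot all_order all_algebra.
From mathcomp Require Export complex.
Set Implicit Arguments. Unset Strict Implicit. Unset Printing Implicit Defensive.
Import Order.TTheory GRing.Theory Num.Theory.
Local Open Scope ring_scope.

(* Non-root node k (paper: node k+1) is an element of 'I_n; the root (node 0,
   the substation) is None.  par k is the parent of node k; the edge set is
   { (par k, k) }, and the edge entering k carries resistance r k and
   reactance x k. *)
Definition step n (par : 'I_n -> option 'I_n) : option 'I_n -> option 'I_n :=
  fun o => obind par o.

Definition is_tree n (par : 'I_n -> option 'I_n) : Prop :=
  forall i : 'I_n, iter n (step par) (Some i) = None.

(* L_i, identified with the set of child endpoints of the edges on the path
   from the root to i (i.e. i and all its non-root ancestors). *)
Definition path_edges n (par : 'I_n -> option 'I_n) (i : 'I_n) : {set 'I_n} :=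
  [set k | [exists m : 'I_n.+1, iter m (step par) (Some i) == Some k]].

Definition R0mx (R : pzRingType) n (par : 'I_n -> option 'I_n) (r : 'I_n -> R)
  : 'M[R]_n :=
  \matrix_(i, j) (2%:R * \sum_(k in path_edges par i :&: path_edges par j) r k).

(* Gamma_c(Omega): columns are the standard basis vectors e_w, w in Omega,
   in increasing order (enum of a set of ordinals is increasing). *)
Definition Gamma (R : pzRingType) c (Om : {set 'I_c}) : 'M[R]_(c, #|Om|) :=
  \matrix_(i, j) ((i == enum_val j)%:R).

(* D = D1 ∪ (D1 + n) inside {1..2n} = 'I_(n+n) *)
Definition dbl n (A : {set 'I_n}) : {set 'I_(n + n)} :=
  [set lshift n i | i in A] :|: [set rshift n i | i in A].

Section System.
Variables (R : fieldType) (n : nat) (par : 'I_n -> option 'I_n)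
          (r x : 'I_n -> R) (D1 S1 : {set 'I_n}).

Definition Dset := dbl D1.
Definition Sset := dbl S1.
Definition Rmx : 'M[R]_(n, #|D1|) := R0mx par r *m Gamma R D1.
Definition Xmx : 'M[R]_(n, #|D1|) := R0mx par x *m Gamma R D1.

(* B = [X R; -1/2 R, 1/2 X]; the input dimension d = 2|D1| is written
   #|D1| + #|D1|. *)
Definition Bmx : 'M[R]_(n + n, #|D1| + #|D1|) :=
  block_mx Xmx Rmx (- (2%:R^-1 *: Rmx)) (2%:R^-1 *: Xmx).

Definition Cmx : 'M[R]_(#|Sset|, n + n) := (Gamma R Sset)^T.

(* The permutation matrix T = [Gamma(S∩D) Gamma(S∩~D) Gamma(~S∩D) Gamma(~S∩~D)]:
   column j is e_{t_j} where t is the concatenated increasing enumeration. *)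
Definition Tseq : seq 'I_(n + n) :=
  enum (Sset :&: Dset) ++ enum (Sset :&: ~: Dset)
  ++ enum (~: Sset :&: Dset) ++ enum (~: Sset :&: ~: Dset).
Definition Tmx : 'M[R]_(n + n) :=
  \matrix_(i, j) ((val i == nth 0%N (map val Tseq) j)%:R).

(* G = Gamma_{2n}({1..s}) *)
Definition Gmx : 'M[R]_(n + n, #|Sset|) := \matrix_(i, j) ((val i == val j)%:R).

Definition Bbar : 'M[R]_(#|Sset|, #|D1| + #|D1|) := Gmx^T *m invmx Tmx *m Bmx.
Definition Cbar : 'M[R]_(#|Sset|) := Cmx *m Tmx *m Gmx.

End System.

Definition trajectory (R : pzRingType) m (M : 'M[R]_m) (z : nat -> 'cV[R]_m) :=
  forall k, z k.+1 = M *m z k.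

Definition exp_conv (R : realFieldType) (u : nat -> R) : Prop :=
  exists c rho : R, 0 <= rho < 1 /\ forall k, `|u k| <= c * rho ^+ k.

Definition exp_conv_vec (R : realFieldType) m (z : nat -> 'cV[R]_m) : Prop :=
  forall i, exp_conv (fun k => z k i 0).

(* Lyapunov stability of z[k+1] = M z[k] (max-norm on components):
   epsilon-delta stability of the origin, together with boundedness of
   every trajectory. *)
Definition lyapunov_stable (R : realFieldType) m (M : 'M[R]_m) : Prop :=
  (forall eps : R, 0 < eps -> exists2 delta : R, 0 < delta &
     forall z, trajectory M z -> (forall i, `|z 0%N i 0| < delta) ->
       forall k i, `|z k i 0| < eps)
  /\ (forall z, trajectory M z -> exists Mb : R, forall k i, `|z k i 0| <= Mb).

(* The argument has three parts.
   1. Selection-matrix algebra: T is a permutation matrix, so T^-1 = T^T, and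
      when S ⊆ D its first s columns form Gamma_{2n}(S).  Hence Cbar = I and
      G^T T^-1 = C, so Hbar = C B F: the reduced state is exactly the sensor
      output, and C (I - H) = (I - Hbar) C.
   2. Spectral decay: if all complex eigenvalues of a real matrix M lie in the
      open unit disc, the entries of M^k are O(rho^k) for some rho < 1.  We
      factor the characteristic polynomial over R[i], use Cayley-Hamilton, and
      peel off one factor M - z at a time via a scalar recurrence estimate.
   3. Closed-loop consequences: with M = I - Hbar, (i) reduced trajectories
      decay exponentially; (ii) a full trajectory satisfies
      e[k] = e[0] - sum_{t<k} B F M^t C e[0], hence is bounded linearly in
      e[0], which gives Lyapunov stability; (iii) the sensed components of e
      are the components of the reduced trajectory C e[k], hence decay. *)

From HB Require Import structures.
From mathcomp Require Import all_boot all_order all_algebra.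
From mathcomp Require Import complex.
From mathcomp Require Import ring lra.
Import Order.TTheory GRing.Theory Num.Theory.
Set Implicit Arguments. Unset Strict Implicit. Unset Printing Implicit Defensive.
Local Open Scope ring_scope.

Section Selection.
Variable R : fieldType.

Lemma sum_delta {N} (f : 'I_N -> R) {b : nat} (hb : (b < N)%N) :
  \sum_(l < N) f l * (val l == b)%:R = f (Ordinal hb).
Proof.
rewrite (bigD1 (Ordinal hb)) //= eqxx mulr1 big1 ?addr0 // => i hi.
suff /negbTE -> : val i != b by rewrite mulr0.
by apply: contra hi => /eqP h; apply/eqP/val_inj.
Qed.

Lemma Gamma_orthonormal c (Om : {set 'I_c}) : (Gamma R Om)^T *m Gamma R Om = 1%:M.
Proof.
apply/matrixP => j k; rewrite !mxE.
under eq_bigr do rewrite !mxE.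
rewrite (eq_bigr (fun i => (i == enum_val j)%:R * (val i == val (enum_val k))%:R)) //.
rewrite (sum_delta _ (ltn_ord (enum_val k))).
have -> : Ordinal (ltn_ord (enum_val k)) = enum_val k by apply: val_inj.
by rewrite (inj_eq enum_val_inj) eq_sym.
Qed.

Lemma Gamma_select c (Om : {set 'I_c}) (v : 'cV[R]_c) p (hp : p \in Om) :
  ((Gamma R Om)^T *m v) (enum_rank_in hp p) 0 = v p 0.
Proof.
rewrite mxE; under eq_bigr do rewrite !mxE.
rewrite (enum_rankK_in hp hp) (bigD1 p) //= eqxx mul1r big1 ?addr0 //.
by move=> i /negbTE ->; rewrite mul0r.
Qed.

Variables (n : nat) (D1 S1 : {set 'I_n}).
Local Notation N := (n + n)%N.
Local Notation S := (Sset S1).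
Local Notation D := (Dset D1).

(* Tseq lists every index of 'I_(n+n) exactly once, so T is a permutation
   matrix. *)
Lemma Tseq_size : size (Tseq D1 S1) = N.
Proof.
rewrite /Tseq !size_cat -!cardE.
have splitD := cardsID D S; have splitCD := cardsID D (~: S).
rewrite !setDE in splitD splitCD.
have := cardsC S; rewrite card_ord => splitS.
by rewrite addnA splitD splitCD splitS.
Qed.

Lemma Tseq_uniq : uniq (Tseq D1 S1).
Proof.
apply: (@leq_size_uniq _ (enum 'I_N)); first exact: enum_uniq.
  move=> i _; rewrite /Tseq !mem_cat !mem_enum !in_setI !in_setC.
  by case: (i \in S); case: (i \in D).
by rewrite Tseq_size size_enum_ord.
Qed.

Lemma Tmx_orthogonal : (Tmx R D1 S1)^T *m Tmx R D1 S1 = 1%:M.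
Proof.
apply/matrixP => j k; rewrite !mxE.
under eq_bigr do rewrite !mxE mulrC.
have size_vals : size (map val (Tseq D1 S1)) = N by rewrite size_map Tseq_size.
have uniq_vals : uniq (map val (Tseq D1 S1)).
  by rewrite (map_inj_uniq val_inj) Tseq_uniq.
have hj : (nth 0%N (map val (Tseq D1 S1)) j < N)%N.
  by rewrite (nth_map j) ?Tseq_size // ltn_ord.
by rewrite sum_delta /= (nth_uniq _ _ _ uniq_vals) ?size_vals.
Qed.

Lemma invmx_Tmx : invmx (Tmx R D1 S1) = (Tmx R D1 S1)^T.
Proof.
have [_ unitT] := mulmx1_unit Tmx_orthogonal.
by rewrite -[RHS]mulmx1 -(mulmxV unitT) mulmxA Tmx_orthogonal mul1mx.
Qed.

Hypothesis SsubD : S \subset D.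

Lemma Tmx_Gmx : Tmx R D1 S1 *m Gmx R S1 = Gamma R S.
Proof.
apply/matrixP => i j; rewrite !mxE.
under eq_bigr do rewrite !mxE.
have hj : (val j < N)%N.
  by apply: leq_trans (ltn_ord j) _; rewrite -[X in (_ <= X)%N](card_ord N) max_card.
rewrite sum_delta /= (nth_map i) ?Tseq_size //.
by rewrite /Tseq (setIidPl SsubD) nth_cat -cardE ltn_ord -enum_val_nth.
Qed.

Lemma Cbar_id : Cbar R D1 S1 = 1%:M.
Proof. by rewrite /Cbar -mulmxA Tmx_Gmx Gamma_orthonormal. Qed.

Lemma reduction_is_output : (Gmx R S1)^T *m invmx (Tmx R D1 S1) = Cmx R S1.
Proof. by rewrite invmx_Tmx -trmx_mul Tmx_Gmx. Qed.

End Selection.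

Section GeometricBounds.
Variable R : realFieldType.

Lemma le_sum_nonneg {I : finType} (f : I -> R) :
  (forall j, 0 <= f j) -> forall i, f i <= \sum_j f j.
Proof. by move=> f0 i; rewrite (bigD1 i) //= lerDl sumr_ge0. Qed.

Lemma le_double_sum {I J : finType} (f : I -> J -> R) :
  (forall i j, 0 <= f i j) -> forall i j, f i j <= \sum_i' \sum_j' f i' j'.
Proof.
move=> f0 i j; apply: le_trans (le_sum_nonneg (f0 i) j) _.
by apply: (le_sum_nonneg (f := fun i' => \sum_j' f i' j')) => i'; apply: sumr_ge0.
Qed.

Lemma mul_entry_bound p q s (X : 'M[R]_(p, q)) (Y : 'M[R]_(q, s)) a b :
  (forall i j, `|X i j| <= a) -> (forall i j, `|Y i j| <= b) ->
  forall i j, `|(X *m Y) i j| <= q%:R * (a * b).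
Proof.
move=> bX bY i j; rewrite mxE; apply: le_trans (ler_norm_sum _ _ _) _.
apply: (@le_trans _ _ (\sum_(l < q) (a * b))).
  by apply: ler_sum => l _; rewrite normrM; apply: ler_pM.
by rewrite sumr_const card_ord mulr_natl.
Qed.

Lemma geometric_sum_le (rho : R) k : 0 <= rho -> rho < 1 ->
  \sum_(t < k) rho ^+ t <= (1 - rho)^-1.
Proof.
move=> rho0 rho1.
have telescope : (\sum_(t < k) rho ^+ t) * (1 - rho) = 1 - rho ^+ k.
  elim: k => [|k IH]; first by rewrite big_ord0 expr0 mul0r subrr.
  by rewrite big_ord_recr /= mulrDl IH exprS; ring.
have rhok0 : 0 <= rho ^+ k by rewrite exprn_ge0.
have gap : 0 < 1 - rho by rewrite subr_gt0.
rewrite -(ler_pM2r gap) telescope mulVf ?gt_eqF //; lra.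
Qed.

Lemma geometric_recurrence (a b : nat -> R) (mu rho c : R) :
  0 <= mu -> mu < rho -> 0 <= c -> (forall k, 0 <= a k) ->
  (forall k, a k.+1 <= mu * a k + b k) -> (forall k, b k <= c * rho ^+ k) ->
  forall k, a k <= (a 0%N + c / (rho - mu)) * rho ^+ k.
Proof.
move=> mu0 murho c0 a0 stepa bdb.
have gap : 0 < rho - mu by rewrite subr_gt0.
set q := c / (rho - mu).
have qE : q * (rho - mu) = c by rewrite /q mulfVK // gt_eqF.
have q0 : 0 <= q by rewrite divr_ge0 // ltW.
have invariant : mu * (a 0%N + q) + c <= (a 0%N + q) * rho.
  have := mulr_ge0 (a0 0%N) (ltW gap); lra.
elim=> [|k IH]; first by rewrite expr0 mulr1 lerDl.
have rhok0 : 0 <= rho ^+ k by rewrite exprn_ge0 // ltW // (le_lt_trans mu0).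
have stepk := stepa k; have bdk := bdb k.
rewrite exprS; set r := rho ^+ k in rhok0 IH bdk *.
have scaled_IH : mu * a k <= mu * ((a 0%N + q) * r) by rewrite ler_wpM2l.
have scaled_invariant : (mu * (a 0%N + q) + c) * r <= (a 0%N + q) * rho * r.
  by rewrite ler_wpM2r.
lra.
Qed.

Definition power_decay m (M : 'M[R]_m) : Prop :=
  exists c rho : R, [/\ 0 <= c, 0 <= rho, rho < 1 &
    forall k i j, `|(M ^+ k) i j| <= c * rho ^+ k].

End GeometricBounds.

Section SpectralDecay.
Variable R : rcfType.
Local Notation C := R[i].
Local Notation normc := (@Normc.normc R).

(* Estimates on complex numbers are carried out on their modulus normc z,
   an element of the ordered field R with `|z| = (normc z)%:C. *)
Lemma normc_ge0 (z : C) : 0 <= normc z.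
Proof. by case: z => a b; exact: sqrtr_ge0. Qed.

Lemma normcE (z : C) : `|z| = (normc z)%:C%C.
Proof. by case: z. Qed.

Lemma normc_real (a : R) : normc a%:C%C = `|a|.
Proof. by rewrite /Normc.normc /= expr0n /= addr0 sqrtr_sqr. Qed.

Lemma complex_recurrence (u v : nat -> C) (z : C) (rho c A : R) :
  normc z < rho -> 0 <= c -> normc (u 0%N) <= A ->
  (forall k, u k.+1 = z * u k + v k) -> (forall k, normc (v k) <= c * rho ^+ k) ->
  forall k, normc (u k) <= (A + c / (rho - normc z)) * rho ^+ k.
Proof.
move=> zrho c0 u0A stepu bdv k.
have stepn j : normc (u j.+1) <= normc z * normc (u j) + normc (v j).
  by rewrite stepu -Normc.normcM; exact: le_normcD.
apply: le_trans (geometric_recurrence (normc_ge0 z) zrho c0 (fun j => normc_ge0 _)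
  stepn bdv k) _.
apply: ler_wpM2r; first by rewrite exprn_ge0 // ltW // (le_lt_trans (normc_ge0 z)).
by rewrite lerD2r.
Qed.

(* If P * prod_{z in s} (M - z) = 0 with every |z| < 1, then the entries of
   P M^k decay geometrically; by induction on s, peeling one factor at a time
   and applying complex_recurrence to P M^{k+1} = z P M^k + P (M - z) M^k. *)
Lemma annihilated_decay m (M : 'M[C]_m.+1) (s : seq C) :
  (forall z, z \in s -> normc z < 1) ->
  forall P : 'M[C]_m.+1, P * \prod_(z <- s) (M - z%:M) = 0 ->
  exists c rho : R, [/\ 0 <= c, 0 <= rho, rho < 1 &
    forall k i j, normc ((P * M ^+ k) i j) <= c * rho ^+ k].
Proof.
elim: s => [|z s IH] small P.
  rewrite big_nil mulr1 => ->; exists 0, 0; split; rewrite ?ltr01 //.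
  by move=> k i j; rewrite mul0r mxE Normc.normc0 mul0r.
rewrite big_cons mulrA => annP.
have [|c1 [rho1 [c10 rho10 rho11 bd1]]] := IH _ _ annP.
  by move=> w w_s; apply: small; rewrite in_cons w_s orbT.
have zsmall : normc z < 1 by apply: small; rewrite mem_head.
have z0 := normc_ge0 z.
set rho := Num.max rho1 ((1 + normc z) / 2).
have rho1_le : rho1 <= rho by rewrite le_max lexx.
have mid_le : (1 + normc z) / 2 <= rho by rewrite le_max lexx orbT.
have rho_lt1 : rho < 1 by rewrite gt_max rho11 /=; lra.
have gap : 0 < rho - normc z by lra.
pose A := \sum_i \sum_j normc (P i j).
have A0 : 0 <= A by apply: sumr_ge0 => i _; apply: sumr_ge0 => j _; apply: normc_ge0.
exists (A + c1 / (rho - normc z)), rho; split; [|lra|lra|].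
  by rewrite addr_ge0 // divr_ge0 // ltW.
move=> k i j; apply: (@complex_recurrence (fun k => (P * M ^+ k) i j)
  (fun k => (P * (M - z%:M) * M ^+ k) i j)) => //=.
- lra.
- rewrite expr0 mulr1.
  by apply: (le_double_sum (f := fun i j => normc (P i j))) => i' j'; apply: normc_ge0.
- move=> k'.
  have -> : P * M ^+ k'.+1 = z *: (P * M ^+ k') + P * (M - z%:M) * M ^+ k'.
    rewrite mulrBr mulrBl -scalemx1 -[1%:M]/(1 : 'M_m.+1) mulr_algr scalerAl.
    by rewrite exprS mulrA addrC subrK.
  by rewrite !mxE.
- move=> k'; apply: le_trans (bd1 k' i j) _; apply: ler_wpM2l => //.
  rewrite lerXn2r ?nnegrE //; lra.
Qed.

(* By Cayley-Hamilton
   the product of the factors M - z over the complex roots z of its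
   characteristic polynomial vanishes. *)
Theorem spectral_power_decay m (M : 'M[R]_m) :
  (forall z : C, eigenvalue (map_mx (real_complex R) M) z -> `|z| < 1) ->
  power_decay M.
Proof.
case: m M => [|m] M inside.
  by exists 0, 0; split; rewrite ?ltr01 // => k [].
set MC := map_mx (real_complex R) M in inside.
have [zs charE] := closed_field_poly_normal (char_poly MC).
rewrite (monicP (char_poly_monic MC)) scale1r in charE.
have annihilate : 1 * \prod_(z <- zs) (MC - z%:M) = 0.
  rewrite mul1r -(Cayley_Hamilton MC) charE rmorph_prod; apply: eq_bigr => z _.
  by rewrite rmorphB /= horner_mx_X horner_mx_C.
have small z : z \in zs -> normc z < 1.
  move=> zs_z; rewrite -ltcR -normcE; apply: inside.
  by rewrite eigenvalue_root_char charE root_prod_XsubC.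
have [c [rho [c0 rho0 rho1 bd]]] := annihilated_decay small annihilate.
exists c, rho; split => // k i j; have := bd k i j.
by rewrite mul1r -rmorphXn mxE normc_real.
Qed.

End SpectralDecay.

Lemma trajectory_pow (R : pzRingType) m (M : 'M[R]_m) (z : nat -> 'cV[R]_m) :
  trajectory M z -> forall k, z k = M ^+ k *m z 0%N.
Proof.
move=> trajz; elim=> [|k IH]; first by rewrite expr0 mul1mx.
by rewrite trajz IH mulmxA exprS.
Qed.

Lemma intertwined_output (R : pzRingType) m s (Cm : 'M[R]_(s, m))
  (N : 'M[R]_m) (M : 'M[R]_s) (e : nat -> 'cV[R]_m) :
  Cm *m N = M *m Cm -> trajectory N e -> trajectory M (fun k => Cm *m e k).
Proof. by move=> inter traje k; rewrite traje mulmxA inter -mulmxA. Qed.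

(* For the output-feedback closed loop N = 1 - A Cm, the state only moves
   along the range of A, driven by the output Cm e[k] = M^k Cm e[0]. *)
Lemma intertwined_trajectory (R : pzRingType) m s (A : 'M[R]_(m, s))
  (Cm : 'M[R]_(s, m)) (M : 'M[R]_s) (e : nat -> 'cV[R]_m) :
  Cm *m (1%:M - A *m Cm) = M *m Cm -> trajectory (1%:M - A *m Cm) e ->
  forall k, e k = e 0%N - \sum_(t < k) A *m (M ^+ t *m (Cm *m e 0%N)).
Proof.
move=> inter traje; have output := trajectory_pow (intertwined_output inter traje).
elim=> [|k IH]; first by rewrite big_ord0 subr0.
rewrite traje mulmxBl mul1mx -mulmxA output big_ord_recr /= {1}IH.
by rewrite opprD addrA.
Qed.

Lemma eigenvalue_shift (F : fieldType) m (A : 'M[F]_m) z :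
  eigenvalue (1%:M - A) z -> eigenvalue A (1 - z).
Proof.
move=> /eigenvalueP [v eigv v_neq0]; apply/eigenvalueP; exists v => //.
move: eigv; rewrite mulmxBr mulmx1 => eigv.
by rewrite scalerBl scale1r -eigv opprB addrC subrK.
Qed.

Section ClosedLoop.
Variable R : realFieldType.

Lemma power_decay_exp_conv m (M : 'M[R]_m) :
  power_decay M -> forall z, trajectory M z -> exp_conv_vec z.
Proof.
move=> [c [rho [c0 rho0 rho1 decay]]] z trajz i.
set z0 := \sum_l `|z 0%N l 0|.
have z0_bound l j : `|z 0%N l j| <= z0.
  by rewrite (ord1 j); apply: (le_sum_nonneg (f := fun l => `|z 0%N l 0|)).
exists (m%:R * (c * z0)), rho; split; first by rewrite rho0 rho1.
move=> k; rewrite (trajectory_pow trajz).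
have -> : m%:R * (c * z0) * rho ^+ k = m%:R * (c * rho ^+ k * z0) by ring.
exact: mul_entry_bound (decay k) z0_bound i 0.
Qed.

Lemma intertwined_linear_bound m s (A : 'M[R]_(m, s)) (Cm : 'M[R]_(s, m))
  (M : 'M[R]_s) :
  power_decay M -> Cm *m (1%:M - A *m Cm) = M *m Cm ->
  exists2 K : R, 0 <= K & forall e, trajectory (1%:M - A *m Cm) e ->
    forall k i, `|e k i 0| <= K * \sum_l `|e 0%N l 0|.
Proof.
move=> [c [rho [c0 rho0 rho1 decay]]] inter.
set normA := \sum_i \sum_j `|A i j|.
set normC := \sum_i \sum_j `|Cm i j|.
have normA0 : 0 <= normA by apply: sumr_ge0 => i _; apply: sumr_ge0.
have normC0 : 0 <= normC by apply: sumr_ge0 => i _; apply: sumr_ge0.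
have boundA := le_double_sum (fun i j => normr_ge0 (A i j)).
have boundC := le_double_sum (fun i j => normr_ge0 (Cm i j)).
set kappa := s%:R * (normA * (s%:R * (c * (m%:R * normC)))).
have kappa0 : 0 <= kappa by rewrite /kappa !mulr_ge0.
have gap : 0 < 1 - rho by rewrite subr_gt0.
exists (1 + kappa * (1 - rho)^-1); first by rewrite addr_ge0 // mulr_ge0 // invr_ge0 ltW.
move=> e traje k i; rewrite (intertwined_trajectory inter traje) !mxE summxE.
set e0 := \sum_l `|e 0%N l 0|.
have e0_bound l j : `|e 0%N l j| <= e0.
  by rewrite (ord1 j); apply: (le_sum_nonneg (f := fun l => `|e 0%N l 0|)).
have term_bound (t : 'I_k) :
    `|(A *m (M ^+ t *m (Cm *m e 0%N))) i 0| <= kappa * e0 * rho ^+ t.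
  have -> : kappa * e0 * rho ^+ t =
      s%:R * (normA * (s%:R * (c * rho ^+ t * (m%:R * (normC * e0))))).
    by rewrite /kappa; ring.
  exact: mul_entry_bound boundA
    (mul_entry_bound (decay t) (mul_entry_bound boundC e0_bound)) i 0.
have sum_bound : `|\sum_(t < k) (A *m (M ^+ t *m (Cm *m e 0%N))) i 0|
    <= kappa * e0 * (1 - rho)^-1.
  apply: le_trans (ler_norm_sum _ _ _) _.
  apply: le_trans (ler_sum _ (fun t _ => term_bound t)) _.
  rewrite -mulr_sumr; apply: ler_wpM2l; first by rewrite mulr_ge0 ?sumr_ge0.
  exact: geometric_sum_le.
apply: le_trans (ler_normB _ _) _; have := e0_bound i 0.
have : 0 <= e0 by apply: sumr_ge0.
lra.
Qed.

Lemma linear_bound_lyapunov m (N : 'M[R]_m) (K : R) : 0 <= K ->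
  (forall e, trajectory N e -> forall k i, `|e k i 0| <= K * \sum_l `|e 0%N l 0|) ->
  lyapunov_stable N.
Proof.
move=> K0 bound; split; last by move=> z trajz; exists (K * \sum_l `|z 0%N l 0|); exact: bound.
move=> eps eps0; have Km0 : 0 < K * m%:R + 1 by rewrite ltr_wpDl // mulr_ge0.
exists (eps / (K * m%:R + 1)); first by rewrite divr_gt0.
move=> z trajz small k i.
set delta := eps / (K * m%:R + 1).
have deltaE : delta * (K * m%:R + 1) = eps by rewrite /delta mulfVK // gt_eqF.
have delta0 : 0 < delta by rewrite divr_gt0.
have init : \sum_l `|z 0%N l 0| <= m%:R * delta.
  apply: le_trans (_ : _ <= \sum_(l < m) delta) _.
    by apply: ler_sum => l _; apply: ltW.
  by rewrite sumr_const card_ord mulr_natl.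
have := bound z trajz k i.
have : K * \sum_l `|z 0%N l 0| <= K * (m%:R * delta) by apply: ler_wpM2l.
nra.
Qed.

End ClosedLoop.

Theorem theorem2 (R : rcfType) (n : nat) (par : 'I_n -> option 'I_n)
  (r x : 'I_n -> R) (D1 S1 : {set 'I_n})
  (F : 'M[R]_(#|D1| + #|D1|, #|Sset S1|)) :
  (0 < n)%N -> is_tree par -> D1 != set0 -> S1 != set0 ->
  Sset S1 \subset Dset D1 ->
  let H := Bmx par r x D1 *m F *m Cmx R S1 in
  let Fbar := F *m Cbar R D1 S1 in
  let Hbar := Bbar par r x D1 S1 *m Fbar in
  (forall lam : R[i],
     eigenvalue (map_mx (fun a : R => (a%:C)%C) Hbar) lam -> `|lam - 1| < 1) ->
  (forall eb, trajectory (1%:M - Hbar) eb -> exp_conv_vec eb)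
  /\ lyapunov_stable (1%:M - H)
  /\ (forall e, trajectory (1%:M - H) e ->
        forall p, p \in Sset S1 -> exp_conv (fun k => e k p 0)).
Proof.
move=> _ _ _ _ SsubD H Fbar Hbar spectrum.
set M := 1%:M - Hbar.
have HbarE : Hbar = Cmx R S1 *m Bmx par r x D1 *m F.
  by rewrite /Hbar /Fbar Cbar_id // mulmx1 /Bbar reduction_is_output.
have inter : Cmx R S1 *m (1%:M - H) = M *m Cmx R S1.
  by rewrite /M /H HbarE mulmxBr mulmx1 mulmxBl mul1mx !mulmxA.
have decay : power_decay M.
  apply: spectral_power_decay => z.
  rewrite /M map_mxB map_mx1 => /eigenvalue_shift /spectrum.
  by rewrite addrAC subrr add0r normrN.
have [K K0 bound] := intertwined_linear_bound decay inter.
split; first exact: power_decay_exp_conv.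
split; first exact: linear_bound_lyapunov K0 bound.
move=> e traje p Sp.
have [c [rho [rho_range bd]]] :=
  power_decay_exp_conv decay (intertwined_output inter traje) (enum_rank_in Sp p).
by exists c, rho; split => // k; rewrite -(Gamma_select (e k) Sp); exact: bd.
Qed.
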